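(* For every $\alpha \in (0,\frac12)$ it holds that $T_\alpha(\alpha) = T_\alpha^2(1-\alpha)$.
   Context: For $\alpha \in (0,1)$ let $D_\alpha = \bigcup_{n \ge 1} \big[ \frac{1}{n+\alpha}, \frac1n \big]$, $D_\alpha^{\mathsf c} = [0,1]\setminus D_\alpha$, $I_\alpha = [\min\{\alpha,1-\alpha\},1]$, and $T_\alpha : I_\alpha \to I_\alpha$, $T_\alpha(x) = \frac1x - \lfloor \frac1x \rfloor$ if $x \in D_\alpha^{\mathsf c}$, $T_\alpha(x) = 1 + \lfloor \frac1x \rfloor - \frac1x$ if $x \in D_\alpha$. *)

From Stdlib Require Import Reals Lra ClassicalDescription.
Open Scope R_scope.

Definition floorR (x : R) : R := IZR (Int_part x).

Definition D (alpha x : R) : Prop :=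
  exists n : nat, (1 <= n)%nat /\ 1 / (INR n + alpha) <= x /\ x <= 1 / INR n.

Definition I (alpha x : R) : Prop := Rmin alpha (1 - alpha) <= x /\ x <= 1.

(* T_alpha, defined (classically) on all reals; only its values on I_alpha matter. *)
Definition T (alpha x : R) : R :=
  if excluded_middle_informative (D alpha x)
  then 1 + floorR (1 / x) - 1 / x
  else 1 / x - floorR (1 / x).

(** In the reciprocal coordinate [u = 1/x], [x] lies in [D_alpha] iff [u] lies in some
    [[n, n + alpha]] with [n >= 1], and [T_alpha x] depends only on [u] modulo [1] and on that
    membership.  For [alpha < 1/2], [u = 1/(1-alpha)] lies in the gap [(1 + alpha, 2)], so
    [T_alpha (1 - alpha) = 1/(1-alpha) - 1 = alpha/(1-alpha)], whose reciprocal is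
    [1/alpha - 1].  Lowering [u = 1/alpha > 2] by one changes neither its fractional part nor
    its membership in the intervals [[n, n + alpha]], hence
    [T_alpha (alpha/(1-alpha)) = T_alpha alpha]. *)

From Stdlib Require Import Reals Lra Lia ClassicalDescription.
Open Scope R_scope.

Lemma floorR_spec (x : R) (k : Z) : x - 1 < IZR k <= x -> floorR x = IZR k.
Proof. intros Hk. unfold floorR. now rewrite <- (Int_part_spec x k Hk). Qed.

Lemma floorR_sub1 (x : R) : floorR (x - 1) = floorR x - 1.
Proof.
  destruct (base_Int_part x) as [Hle Hgt].
  rewrite (floorR_spec (x - 1) (Int_part x - 1)); unfold floorR;
    rewrite ?minus_IZR; lra.
Qed.

Lemma le_recip_iff (x y : R) : 0 < x -> 0 < y -> x <= y <-> 1 / y <= 1 / x.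
Proof.
  intros Hx Hy. unfold Rdiv. rewrite !Rmult_1_l. split; intros H.
  - now apply Rinv_le_contravar.
  - rewrite <- (Rinv_inv x), <- (Rinv_inv y).
    apply Rinv_le_contravar; [apply Rinv_0_lt_compat; lra | exact H].
Qed.

Lemma recip_le_swap (p x : R) : 0 < p -> 0 < x -> 1 / p <= x <-> 1 / x <= p.
Proof.
  intros Hp Hx. rewrite le_recip_iff by (try apply Rdiv_lt_0_compat; lra).
  replace (1 / (1 / p)) with p by (field; lra). reflexivity.
Qed.

Lemma le_recip_swap (p x : R) : 0 < p -> 0 < x -> x <= 1 / p <-> p <= 1 / x.
Proof.
  intros Hp Hx. rewrite le_recip_iff by (try apply Rdiv_lt_0_compat; lra).
  replace (1 / (1 / p)) with p by (field; lra). reflexivity.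
Qed.

Definition Drecip (alpha u : R) : Prop :=
  exists n : nat, (1 <= n)%nat /\ INR n <= u /\ u <= INR n + alpha.

Lemma D_Drecip (alpha x : R) :
  0 <= alpha -> 0 < x -> D alpha x <-> Drecip alpha (1 / x).
Proof.
  intros Ha Hx. unfold D, Drecip.
  split; intros [n [Hn Hbounds]]; exists n;
    assert (HnR : 1 <= INR n) by (apply (le_INR 1); lia).
  - rewrite recip_le_swap, le_recip_swap in Hbounds by lra. tauto.
  - rewrite recip_le_swap, le_recip_swap by lra. tauto.
Qed.

Lemma Drecip_sub1 (alpha u : R) :
  1 + alpha < u -> Drecip alpha (u - 1) <-> Drecip alpha u.
Proof.
  intros Hu. split; intros [n [Hn Hbounds]].
  - exists (S n). rewrite S_INR. split; [lia | lra].
  - destruct n as [|[|m]]; [lia | simpl in Hbounds; lra |].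
    exists (S m). rewrite (S_INR (S m)) in Hbounds. split; [lia | lra].
Qed.

Lemma not_Drecip_gap (alpha u : R) : 1 + alpha < u < 2 -> ~ Drecip alpha u.
Proof.
  intros Hu [n [Hn Hbounds]].
  destruct n as [|[|m]]; [lia | simpl in Hbounds; lra |].
  assert (2 <= INR (S (S m))) by (apply (le_INR 2); lia). lra.
Qed.

Lemma T_recip_sub1 (alpha x y : R) :
  0 <= alpha -> 0 < x -> 0 < y -> 1 / y = 1 / x - 1 -> 1 + alpha < 1 / x ->
  T alpha y = T alpha x.
Proof.
  intros Ha Hx Hy Hxy Hgap.
  assert (HD : D alpha y <-> D alpha x).
  { rewrite !D_Drecip, Hxy by assumption. now apply Drecip_sub1. }
  unfold T. rewrite Hxy, floorR_sub1.
  destruct (excluded_middle_informative (D alpha y));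
    destruct (excluded_middle_informative (D alpha x)); try tauto; ring.
Qed.

Lemma T_one_sub (alpha : R) :
  0 < alpha -> alpha < 1 / 2 -> T alpha (1 - alpha) = alpha / (1 - alpha).
Proof.
  intros H0 H1.
  assert (Hu : 1 + alpha < 1 / (1 - alpha) < 2).
  { split; apply Rmult_lt_reg_r with (1 - alpha); try lra;
      unfold Rdiv; rewrite Rmult_assoc, Rinv_l, ?Rmult_1_l; nra. }
  assert (HnotD : ~ D alpha (1 - alpha)).
  { rewrite D_Drecip by lra. now apply not_Drecip_gap. }
  assert (Hfloor : floorR (1 / (1 - alpha)) = 1)
    by (apply (floorR_spec _ 1); lra).
  unfold T. destruct (excluded_middle_informative _); [contradiction|].
  rewrite Hfloor. field. lra.
Qed.

Theorem proposition3p1 (alpha : R) (h0 : 0 < alpha) (h1 : alpha < 1 / 2) :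
  T alpha alpha = T alpha (T alpha (1 - alpha)).
Proof.
  rewrite T_one_sub by assumption.
  symmetry. apply T_recip_sub1; try lra.
  - apply Rdiv_lt_0_compat; lra.
  - field. lra.
  - apply Rmult_lt_reg_r with alpha; [lra|].
    unfold Rdiv. rewrite Rmult_assoc, Rinv_l; nra.
Qed.
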